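(* Let $p$ be a prime and $1\le e<p$. For all but finitely many integers $n\ge1$ there exists $c\in\overline{\mathbb{F}_p}$ such that the correspondence $C_c:y^e=x^p+c$ over $\overline{\mathbb{F}_p}$ admits a sequence $x_0=0,x_1,\dots,x_n=0$ with $(x_i,x_{i+1})\in C_c$ for $0\le i<n$, but admits no sequence $x_0=0,x_1,\dots,x_m=0$ with $(x_i,x_{i+1})\in C_c$ for $0\le i<m$ and $1\le m<n$.
   Context: $C_c=\{(a,b)\in\overline{\mathbb{F}_p}^2: b^e=a^p+c\}$. *)

From HB Require Import structures.
From mathcomp Require Import all_boot all_order all_algebra all_field.
Set Implicit Arguments. Unset Strict Implicit. Unset Printing Implicit Defensive.
Import GRing.Theory.
Local Open Scope ring_scope.

(* Every element of F is algebraic over the prime subfield of F, i.e. is a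
   root of a nonzero polynomial whose coefficients are images of naturals.
   Together with "algebraically closed" and "characteristic p", this
   characterizes F as (a model of) the algebraic closure of F_p. *)
Definition algebraic_over_prime_field (F : fieldType) : Prop :=
  forall x : F, exists q : {poly F},
    [/\ q != 0, (forall i : nat, exists k : nat, q`_i = k%:R) & root q x].

Definition in_Cc (F : fieldType) (p e : nat) (c : F) (a b : F) : Prop :=
  b ^+ e = a ^+ p + c.

Definition Cc_cycle (F : fieldType) (p e : nat) (c : F) (n : nat) : Prop :=
  exists x : nat -> F,
    [/\ x 0%N = 0, x n = 0 & forall i : nat, (i < n)%N -> in_Cc p e c (x i) (x i.+1)].

(* Running a cycle backwards from x_n = 0 and using that Frobenius is additive,
   x_(n-k) ^+ p ^ k is the value at c of P_k, where P_0 = 0 and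
   P_(k+1) = P_k ^+ e - X ^+ p ^ k; so C_c has a cycle of length n through 0 iff
   P_n(c) = 0, and P_n has degree p ^ (n-1). If c has exact period d, it is a simple
   root of P_d (P_d' is a unit multiple of a product of the P_j, 0 < j < d, since
   e is prime to p), and its multiplicity in P_(jd) is e ^ (j-1). If no root of P_n
   had exact period n, counting roots with multiplicity would give
   p ^ (n-1) <= e ^ (n-1) + p ^ (n/2) * e ^ (n/2): the root 0 has period 1, and the
   other roots have periods 2 <= d <= n/2, so they are among the at most p ^ (n/2)
   roots of P_1 * ... * P_(n/2). Since e < p this fails for large n. *)

From HB Require Import structures.
From mathcomp Require Import all_boot all_order all_algebra all_field.
From mathcomp Require Import ring zify.
From Stdlib Require Import Classical.
Set Implicit Arguments. Unset Strict Implicit. Unset Printing Implicit Defensive.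
Import GRing.Theory.
Local Open Scope ring_scope.

Lemma size_le_undup_mul (T : eqType) (s : seq T) B :
  (forall x, x \in s -> (count_mem x s <= B)%N) -> (size s <= size (undup s) * B)%N.
Proof.
move=> cntB.
have -> : size s = (\sum_(x <- undup s) count_mem x s)%N.
  rewrite -(perm_size (perm_count_undup s)) size_flatten /shape -map_comp.
  by rewrite sumnE big_map; apply: eq_bigr => x _ /=; rewrite size_nseq.
rewrite -[X in (_ <= X * _)%N]count_predT -sum1_count big_distrl /=.
rewrite big_seq [X in (_ <= X)%N]big_seq; apply: leq_sum => x.
by rewrite mem_undup mul1n => /cntB.
Qed.

Lemma eventually_mul_expn_lt K a b : (a < b)%N ->
  exists N, forall t, (N <= t)%N -> (K * a ^ t < b ^ t)%N.
Proof.
move=> ab.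
have bernoulli t : (a ^ t * (a + t) <= a * a.+1 ^ t)%N.
  elim: t => [|t IH]; first by rewrite !expn0 muln1 mul1n addn0.
  by rewrite !expnS; move: IH; set x := (a ^ t)%N; set y := (a.+1 ^ t)%N; nia.
case: a ab bernoulli => [|a] ab bernoulli.
  by exists 1%N => t t1; rewrite exp0n // muln0 expn_gt0; lia.
exists (K * a.+1).+1 => t Ht.
have := bernoulli t.
have : (a.+2 ^ t <= b ^ t)%N by rewrite leq_exp2r //; lia.
have : (0 < a.+1 ^ t)%N by rewrite expn_gt0.
nia.
Qed.

Lemma eventually_expn_sum_lt e p : (e < p)%N -> exists N, forall n, (N <= n)%N ->
  (e ^ n.-1 + p ^ (n %/ 2) * e ^ (n %/ 2) < p ^ n.-1)%N.
Proof.
move=> ep; have p0 : (0 < p)%N by lia.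
have [N1 lt1] := eventually_mul_expn_lt 2 ep.
have [N2 lt2] := eventually_mul_expn_lt (2 * p) ep.
exists (2 * (N1 + N2)).+2 => n Nn; set h := (n %/ 2)%N.
have {}lt1 := lt1 n.-1 ltac:(lia).
have {}lt2 := lt2 h ltac:(by rewrite /h leq_divRL //; lia).
have half : (p ^ h * p ^ h <= p * p ^ n.-1)%N.
  rewrite -expnD -expnS prednK; last by lia.
  rewrite leq_pexp2l //; have := divn_eq n 2; have := ltn_pmod n (isT : (0 < 2)%N).
  rewrite /h; lia.
have : (2 * e ^ h * p ^ h < p ^ n.-1)%N.
  rewrite -(ltn_pmul2l p0); apply: leq_trans half.
  by move: lt2; set x := (e ^ h)%N; set y := (p ^ h)%N; nia.
lia.
Qed.

Lemma exprBn_pchar (R : comNzRingType) (x y : R) n :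
  [pchar R].-nat n -> (x - y) ^+ n = x ^+ n - y ^+ n.
Proof. by move=> pn; rewrite exprDn_pchar // exprNn_pchar. Qed.

Lemma pchar_natX (R : nzRingType) p k : p \in [pchar R] -> [pchar R].-nat (p ^ k)%N.
Proof.
move=> pR; rewrite (eq_pnat _ (pcharf_eq pR)) pnatX pnat_id //.
exact: pcharf_prime pR.
Qed.

Section Multiplicity.
Variable F : fieldType.
Implicit Types (x : F) (q : {poly F}).

Lemma mupX x q n : q != 0 -> mup x (q ^+ n) = (mup x q * n)%N.
Proof.
move=> q0; elim: n => [|n IH]; first by rewrite expr0 muln0 mupNroot // root1.
by rewrite exprS mupM ?expf_neq0 // IH mulnS.
Qed.

Lemma mupDr x q1 q2 : q1 != 0 -> q2 != 0 -> (mup x q2 < mup x q1)%N ->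
  mup x (q1 + q2) = mup x q2.
Proof.
move=> q1_0 q2_0 lt21.
have dvd1 : ('X - x%:P) ^+ (mup x q2).+1 %| q1 by rewrite -mup_geq.
have ndvd2 : ~~ (('X - x%:P) ^+ (mup x q2).+1 %| q2) by rewrite -mup_ltn.
have q12_0 : q1 + q2 != 0.
  apply: contraNneq ndvd2 => /eqP; rewrite addr_eq0 => /eqP q1E.
  by rewrite -dvdpNr -q1E.
have dvd_q1 : ('X - x%:P) ^+ mup x q2 %| q1.
  by apply: dvdp_trans dvd1; rewrite dvdp_exp2l.
apply/eqP; rewrite eqn_leq mup_leq // mup_geq // dvdp_addr // ndvd2.
by rewrite dvdp_add // -mup_geq.
Qed.

Lemma mup_simple_root x q : q != 0 -> root q x -> ~~ root q^`() x -> mup x q = 1%N.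
Proof.
move=> q0 qx dqx; apply/eqP; rewrite eqn_leq mup_leq // mup_geq // expr1.
rewrite dvdp_XsubCl qx andbT; apply: contra dqx => /dvdpP[r ->].
by rewrite /root derivM deriv_exp !hornerE subrr expr1 /= !(mulr0, addr0).
Qed.

End Multiplicity.

Lemma exprD_root_expansion (R : comNzRingType) (a b : {poly R}) (r : R) n :
  root b r -> exists2 S, (a + b) ^+ n = a ^+ n + b * S & S.[r] = a.[r] ^+ n.-1 *+ n.
Proof.
move=> /eqP br0; set S := \sum_(i < n) (a + b) ^+ (n.-1 - i) * a ^+ i.
exists S; first by have := subrXX (a + b) a n; rewrite addrAC subrr add0r => <-; ring.
rewrite horner_sum -[n in _ *+ n]card_ord -sumr_const; apply: eq_bigr => i _.
rewrite hornerM !horner_exp hornerD br0 addr0 -exprD subnK //.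
by have := ltn_ord i; lia.
Qed.

Section CyclePolynomials.
Variables (F : closedFieldType) (p e : nat).
Hypotheses (p_pr : prime p) (pF : p \in [pchar F]).
Hypotheses (e_gt0 : (0 < e)%N) (e_lt_p : (e < p)%N).

Let p_gt0 : (0 < p)%N. Proof. exact: prime_gt0. Qed.

Let expn_p_neq0 k : (p ^ k != 0)%N.
Proof. by rewrite -lt0n expn_gt0 p_gt0. Qed.

Let pFX : p \in [pchar {poly F}]. Proof. by rewrite (pchar_lalg {poly F}). Qed.

Let e_neq0 : (e%:R : F) != 0.
Proof. by rewrite -(dvdn_pcharf pF) gtnNdvd. Qed.

Fixpoint cycle_poly k : {poly F} :=
  if k is k'.+1 then cycle_poly k' ^+ e - 'X^(p ^ k') else 0.

Lemma cycle_poly1 : cycle_poly 1 = - 'X.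
Proof. by rewrite /= expr0n; case: e e_gt0 => // ?; rewrite expn0 expr1 sub0r. Qed.

Lemma horner_cycle_polyS k c :
  (cycle_poly k.+1).[c] = (cycle_poly k).[c] ^+ e - c ^+ (p ^ k).
Proof. by rewrite /= !hornerE. Qed.

Lemma size_cycle_poly k : size (cycle_poly k.+1) = (p ^ k).+1.
Proof.
elim: k => [|k IH]; first by rewrite cycle_poly1 size_polyN size_polyX expn0.
rewrite [cycle_poly _]/= addrC size_polyDl ?size_polyN ?size_polyXn //.
apply: leq_ltn_trans (size_poly_exp_leq _ _) _; rewrite IH /= ltnS.
by rewrite expnS mulnC ltn_pmul2r // expn_gt0 p_gt0.
Qed.

Lemma cycle_poly_neq0 k : (0 < k)%N -> cycle_poly k != 0.
Proof. by case: k => // k _; rewrite -size_poly_gt0 size_cycle_poly. Qed.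

Lemma exists_pth_root (t : F) : exists w : F, w ^+ p == t.
Proof.
have : size ('X^p - t%:P) != 1%N by rewrite size_XnsubC //; lia.
by case/closed_rootP => w; rewrite /root !hornerE subr_eq0; exists w.
Qed.

Definition pth_root t := xchoose (exists_pth_root t).

Lemma pth_rootK t : pth_root t ^+ p = t.
Proof. exact/eqP/(xchooseP (exists_pth_root t)). Qed.

Fixpoint backward_orbit c k :=
  if k is k'.+1 then pth_root (backward_orbit c k' ^+ e - c) else 0.

Lemma backward_orbit_expn c k : backward_orbit c k ^+ (p ^ k) = (cycle_poly k).[c].
Proof.
elim: k => [|k IH]; first by rewrite /= expn0 expr1 horner0.
by rewrite horner_cycle_polyS -IH /= expnS exprM pth_rootK exprBn_pchar ?pchar_natX // exprAC.
Qed.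

Lemma Cc_cycleP c n : Cc_cycle p e c n <-> root (cycle_poly n) c.
Proof.
split=> [[x [x0 xn xC]] | /eqP Pc0].
  have xE k : (k <= n)%N -> x (n - k)%N ^+ (p ^ k) = (cycle_poly k).[c].
    elim: k => [|k IH] kn; first by rewrite subn0 xn expn0 expr1 horner0.
    rewrite horner_cycle_polyS -IH; last exact: ltnW.
    have := xC (n - k.+1)%N ltac:(lia); rewrite /in_Cc.
    have -> : (n - k.+1).+1 = (n - k)%N by lia.
    move=> Ck; rewrite expnS exprM -[x _ ^+ p](addrK c) -Ck.
    by rewrite exprBn_pchar ?pchar_natX // exprAC.
  by rewrite /root -(xE n) // subnn x0 expr0n (negbTE (expn_p_neq0 n)).
exists (fun i => backward_orbit c (n - i)); split => [|/[!subnn]//|i lt_in].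
  have := backward_orbit_expn c n; rewrite subn0 Pc0 => /eqP.
  by rewrite expf_eq0 => /andP[_ /eqP].
by rewrite /in_Cc (_ : n - i = (n - i.+1).+1)%N ?pth_rootK ?subrK //; lia.
Qed.

Lemma horner_cycle_polyDn c d k : root (cycle_poly d) c ->
  (cycle_poly (d + k)).[c] = (cycle_poly k).[c] ^+ (p ^ d).
Proof.
move=> /eqP Pd0; elim: k => [|k IH].
  by rewrite addn0 Pd0 horner0 expr0n (negbTE (expn_p_neq0 d)).
rewrite addnS !horner_cycle_polyS IH exprBn_pchar ?pchar_natX // exprAC.
by rewrite expnD mulnC exprM.
Qed.

Lemma horner_cycle_polyMnD c d j k : root (cycle_poly d) c ->
  (cycle_poly (j * d + k)).[c] = (cycle_poly k).[c] ^+ (p ^ (j * d)).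
Proof.
move=> Pd0; elim: j => [|j IH]; first by rewrite mul0n add0n expn0 expr1.
by rewrite mulSn -addnA horner_cycle_polyDn // IH -exprM -expnD addnC.
Qed.

Lemma root_cycle_polyMn c d j : root (cycle_poly d) c -> root (cycle_poly (j * d)) c.
Proof.
move=> Pd0; rewrite /root -[(j * d)%N]addn0 horner_cycle_polyMnD // horner0.
by rewrite expr0n (negbTE (expn_p_neq0 _)).
Qed.

(* (X^(p^k))' = 0 in characteristic p, so P_k' = - e^(k-1) * prod_(0<j<k) P_j^(e-1). *)
Lemma deriv_cycle_poly_neq0 c k : (0 < k)%N ->
  (forall j, (0 < j < k)%N -> ~~ root (cycle_poly j) c) -> (cycle_poly k)^`().[c] != 0.
Proof.
elim: k => [//|[|k] IH] _ Pc.
  by rewrite cycle_poly1 derivN derivX !hornerE oppr_eq0 oner_eq0.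
have -> : cycle_poly k.+2 = cycle_poly k.+1 ^+ e - 'X^(p ^ k.+1) by [].
rewrite derivB deriv_exp derivXn -[_ *+ (p ^ k.+1)%N]mulr_natl natrX (pcharf0 pFX).
rewrite exprS !mul0r subr0 hornerMn hornerM horner_exp -mulr_natr.
rewrite !mulf_neq0 ?expf_neq0 ?Pc ?ltnSn //.
by apply: IH => // j /andP[j0 jk]; rewrite Pc // j0 ltnS ltnW.
Qed.

Definition exact_period d c := [/\ (0 < d)%N, root (cycle_poly d) c &
  forall j, (0 < j < d)%N -> ~~ root (cycle_poly j) c].

(* [~~ root U r] is what makes the multiplicity at r grow by exactly a factor e from
   P_m to P_(m+d). *)
Lemma cycle_polyDn_expansion r m d k : root (cycle_poly m) r -> exact_period d r ->
  (0 < k <= d)%N -> exists2 U : {poly F},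
    cycle_poly (m + k) = cycle_poly k ^+ (p ^ m) + cycle_poly m ^+ e * U & ~~ root U r.
Proof.
move=> Pmr [_ _ Pr]; elim: k => [//|[|k] IH] /andP[_ kd].
  exists 1; last by rewrite root1.
  rewrite cycle_poly1 -sub0r exprBn_pchar ?pchar_natX // expr0n (negbTE (expn_p_neq0 m)).
  by rewrite mulr1 addn1 /= sub0r addrC.
have [U PmkE Ur] := IH (ltnW kd); set a := cycle_poly k.+1 ^+ (p ^ m).
have b_r : root (cycle_poly m ^+ e * U) r.
  by rewrite rootM /root horner_exp (eqP Pmr) expr0n gtn_eqF // mulr0n eqxx.
have [S abE Sr] := exprD_root_expansion a e b_r.
exists (U * S).
  rewrite addnS [cycle_poly (m + k.+1).+1]/= [cycle_poly k.+2]/= PmkE abE.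
  rewrite exprBn_pchar ?pchar_natX // -!exprM -expnD (addnC k.+1) (mulnC e) /a; ring.
have a_r : a.[r] != 0 by rewrite horner_exp expf_neq0 // Pr // kd.
by rewrite rootM negb_or Ur /root Sr -mulr_natr mulf_neq0 ?expf_neq0.
Qed.

Lemma mup_cycle_polyMn r d j : exact_period d r -> (0 < j)%N ->
  mup r (cycle_poly (j * d)) = (e ^ j.-1)%N.
Proof.
move=> rd; have [d0 Pdr Pr] := rd.
have Pd_simple : mup r (cycle_poly d) = 1%N.
  by rewrite mup_simple_root ?cycle_poly_neq0 ?deriv_cycle_poly_neq0.
elim: j => [//|[|j] IH] _; first by rewrite mul1n.
have Pjd0 : (0 < j.+1 * d)%N by rewrite muln_gt0.
have dd : (0 < d <= d)%N by rewrite d0 leqnn.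
have [U PE Ur] := cycle_polyDn_expansion (root_cycle_polyMn j.+1 Pdr) rd dd.
have U0 : U != 0 by apply: contraNneq Ur => ->; rewrite root0.
have [Pd0 Pjd_0] := (cycle_poly_neq0 d0, cycle_poly_neq0 Pjd0).
rewrite mulSnr PE mupDr ?mupMl ?mupX ?IH ?expf_neq0 ?mulf_neq0 //=.
- by rewrite -expnSr.
- by rewrite expf_neq0.
rewrite Pd_simple mul1n -expnSr; apply: (@leq_trans (p ^ j.+1)); first by rewrite ltn_exp2r.
by rewrite leq_pexp2l // leq_pmulr.
Qed.

Lemma exists_exact_period_dvdn n x : (0 < n)%N -> x != 0 -> root (cycle_poly n) x ->
  (exists2 m, (0 < m < n)%N & root (cycle_poly m) x) ->
  exists d, [/\ (1 < d)%N, (2 * d <= n)%N, (d %| n)%N & exact_period d x].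
Proof.
move=> n0 x0 Pnx [m /andP[m0 mn] Pmx].
have exP : exists k, (0 < k)%N && root (cycle_poly k) x by exists m; rewrite m0.
case: (ex_minnP exP) => d /andP[d0 Pdx] d_min.
have Pr j : (0 < j < d)%N -> ~~ root (cycle_poly j) x.
  by case/andP=> j0 jd; apply: contraTN jd => Pjx; rewrite -leqNgt d_min ?j0.
have d_dvd : (d %| n)%N.
  rewrite (divn_eq n d) /root horner_cycle_polyMnD // expf_eq0 in Pnx.
  case/andP: Pnx => _ Pmod.
  by apply: contraTT Pmod => mod0; apply: Pr; rewrite lt0n mod0 ltn_pmod.
have d1 : d != 1%N.
  by apply: contraNneq x0 => d1; move: Pdx; rewrite d1 cycle_poly1 rootN rootX.
have dm : (d <= m)%N by rewrite d_min ?m0.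
exists d; split => //; first by rewrite ltn_neqAle eq_sym d1.
have [q nE] := dvdnP d_dvd; rewrite nE leq_mul2r; apply/orP; right.
by rewrite nE in mn; nia.
Qed.

Definition cycle_poly_prod h := \prod_(i < h) cycle_poly i.+1.

Lemma cycle_poly_prod_neq0 h : cycle_poly_prod h != 0.
Proof. by apply/prodf_neq0 => i _; rewrite cycle_poly_neq0. Qed.

Lemma size_cycle_poly_prod h : (size (cycle_poly_prod h) <= p ^ h)%N.
Proof.
elim: h => [|h IH]; first by rewrite /cycle_poly_prod big_ord0 size_poly1.
rewrite /cycle_poly_prod big_ord_recr /= -/(cycle_poly_prod h).
apply: leq_trans (size_polyMleq _ _) _; rewrite size_cycle_poly addnS /= expnS.
by apply: leq_trans (leq_add IH (leqnn _)) _; have := prime_gt1 p_pr; nia.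
Qed.

Lemma root_cycle_poly_prod h d z : (0 < d <= h)%N -> root (cycle_poly d) z ->
  root (cycle_poly_prod h) z.
Proof.
case: d => // d /andP[_ dh] Pdz.
by rewrite /cycle_poly_prod (bigD1 (Ordinal dh)) //= rootM Pdz.
Qed.

Lemma mup0_cycle_poly n : (0 < n)%N -> mup 0 (cycle_poly n) = (e ^ n.-1)%N.
Proof.
move=> n0; rewrite -[n in cycle_poly n]muln1 mup_cycle_polyMn //.
by split=> // [|j /andP[j0]]; rewrite ?cycle_poly1 ?rootN ?rootX // ltnNge j0.
Qed.

Lemma no_primitive_root_degree_bound n : (0 < n)%N ->
  (forall c, root (cycle_poly n) c -> exists2 m, (0 < m < n)%N & root (cycle_poly m) c) ->
  (p ^ n.-1 <= e ^ n.-1 + p ^ (n %/ 2) * e ^ (n %/ 2))%N.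
Proof.
move=> n0 shorter; have [rs Pn_split] := closed_field_poly_normal (cycle_poly n).
have lc0 : lead_coef (cycle_poly n) != 0 by rewrite lead_coef_eq0 cycle_poly_neq0.
have count_rs z : count_mem z rs = mup z (cycle_poly n).
  by rewrite [in RHS]Pn_split -mul_polyC mupMr ?mu_prod_XsubC // rootC.
have root_rs z : z \in rs -> root (cycle_poly n) z.
  by move=> z_rs; rewrite Pn_split rootZ // root_prod_XsubC.
have period z : z \in rs -> z != 0 ->
    exists d, [/\ (1 < d)%N, (2 * d <= n)%N, (d %| n)%N & exact_period d z].
  move=> z_rs z0; have Pnz := root_rs z z_rs.
  exact: exists_exact_period_dvdn (shorter z Pnz).
have <- : size rs = (p ^ n.-1)%N.
  have := congr1 (fun q : {poly F} => size q) Pn_split.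
  rewrite size_scale // size_prod_XsubC.
  by rewrite -(prednK n0) size_cycle_poly => -[].
rewrite -(count_predC (pred1 0) rs) count_rs mup0_cycle_poly // leq_add2l.
set s := filter (predC (pred1 0)) rs; rewrite -size_filter -/s.
have mem_s z : z \in s = (z != 0) && (z \in rs) by rewrite mem_filter.
apply: (@leq_trans (size (undup s) * e ^ (n %/ 2))).
  apply: size_le_undup_mul => z; rewrite mem_s => /andP[z0 z_rs].
  apply: leq_trans (leq_count_subseq _ (filter_subseq _ _)) _; rewrite count_rs.
  have [d [d1 _ d_dvd zd]] := period z z_rs z0; have d0 := ltnW d1.
  rewrite -{1}(divnK d_dvd) mup_cycle_polyMn //; last by rewrite divn_gt0 // dvdn_leq.
  by rewrite leq_pexp2l // (leq_trans (leq_pred _)) // leq_div2l.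
rewrite leq_mul2r -ltnS; apply/orP; right.
have roots_s : all (root (cycle_poly_prod (n %/ 2))) (undup s).
  apply/allP => z; rewrite mem_undup mem_s => /andP[z0 z_rs].
  have [d [_ dn _ [d0 Pdz _]]] := period z z_rs z0.
  by apply: (root_cycle_poly_prod (d := d)); rewrite // d0 leq_divRL // mulnC.
apply: leq_trans (max_poly_roots (cycle_poly_prod_neq0 _) roots_s (undup_uniq s)) _.
exact: leqW (size_cycle_poly_prod _).
Qed.

Lemma exists_primitive_root n : (0 < n)%N ->
  (e ^ n.-1 + p ^ (n %/ 2) * e ^ (n %/ 2) < p ^ n.-1)%N ->
  exists c, exact_period n c.
Proof.
move=> n0; rewrite ltnNge => /negP bound; apply: NNPP => no_primitive.
apply/bound/no_primitive_root_degree_bound => // c Pnc; apply: NNPP => no_shorter.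
apply: no_primitive; exists c; split=> // m m_lt; apply/negP => Pmc.
by apply: no_shorter; exists m.
Qed.

End CyclePolynomials.

Theorem theorem5p1 (F : closedFieldType) (p e : nat)
  (hp : prime p) (hchar : p \in [pchar F])
  (halg : algebraic_over_prime_field F)
  (he1 : (1 <= e)%N) (hep : (e < p)%N) :
  exists N : nat, forall n : nat, (N <= n)%N -> (1 <= n)%N ->
    exists c : F, Cc_cycle p e c n /\
      ~ (exists m : nat, [/\ (1 <= m)%N, (m < n)%N & Cc_cycle p e c m]).
Proof.
have [N bound] := eventually_expn_sum_lt hep.
exists N => n Nn n0.
have [c [_ Pnc primitive]] := exists_primitive_root hp hchar he1 hep n0 (bound n Nn).
have cycleP := Cc_cycleP hp hchar he1 hep.
exists c; split; first exact/cycleP.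
case=> m [m0 mn /cycleP Pmc].
by have := primitive m; rewrite m0 mn Pmc => /(_ isT).
Qed.
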